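(* Let $K$ be an algebraically closed field of characteristic $0$ and let $A=(A_{ij})_{i,j=1}^{n+1}$ be a block square matrix of order $2n+1$ with entries $a_{ij},b_{ij}\in K$ and blocks $A_{ij}=\begin{pmatrix} a_{ij}&b_{ij}\\ b_{ij}&a_{ij}\end{pmatrix}$ for $1\le i,j\le n$; $A_{i,n+1}=\begin{pmatrix}a_{i,n+1}\\ a_{i,n+1}\end{pmatrix}$ for $1\le i\le n$; $A_{n+1,j}=\begin{pmatrix}a_{n+1,j}&b_{n+1,j}\end{pmatrix}$ for $1\le j\le n$; and $A_{n+1,n+1}=a_{n+1,n+1}$. Let $S=(s_{ij})$ be the $(n+1)\times(n+1)$ matrix with $s_{ij}=a_{ij}+b_{ij}$ for $1\le i\le n+1$, $1\le j\le n$, and $s_{i,n+1}=a_{i,n+1}$ for $1\le i\le n+1$; and let $C=(c_{ij})$ be the $n\times n$ matrix with $c_{ij}=a_{ij}-b_{ij}$, $1\le i,j\le n$. Then $\sigma(A)=\sigma(S)\cup\sigma(C)$.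
   Context: $\sigma(X)$ denotes the spectrum of a square matrix $X$. *)

From mathcomp Require Import all_boot all_order all_algebra.
Set Implicit Arguments. Unset Strict Implicit. Unset Printing Implicit Defensive.
Import GRing.Theory.
Local Open Scope ring_scope.

Definition spectrum (F : fieldType) (m : nat) (X : 'M[F]_m) : pred F :=
  fun l => eigenvalue X l.

(* Block matrix A of order 2n+1. Entries a_{ij}, b_{ij} are indexed by
   'I_(n.+1) (0-based: block index n corresponds to the paper's n+1).
   Row/column r (0-based) with r < 2n lies in block r/2 at position r%2;
   row/column 2n is the last (1x1) block. *)
Definition blockA (F : fieldType) (n : nat) (a b : 'I_n.+1 -> 'I_n.+1 -> F)
  : 'M[F]_(n.*2.+1) :=
  \matrix_(r, c)
    let i : 'I_n.+1 := inord (r %/ 2) in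
    let j : 'I_n.+1 := inord (c %/ 2) in
    if (c : nat) == n.*2 then a i j
    else if odd r == odd c then a i j else b i j.

Definition matS (F : fieldType) (n : nat) (a b : 'I_n.+1 -> 'I_n.+1 -> F)
  : 'M[F]_(n.+1) :=
  \matrix_(i, j) (if j == ord_max then a i j else a i j + b i j).

Definition matC (F : fieldType) (n : nat) (a b : 'I_n.+1 -> 'I_n.+1 -> F)
  : 'M[F]_n :=
  \matrix_(i, j) (a (widen_ord (leqnSn n) i) (widen_ord (leqnSn n) j)
                  - b (widen_ord (leqnSn n) i) (widen_ord (leqnSn n) j)).

From mathcomp Require Import all_boot all_order all_algebra.
From mathcomp Require Import zify.
Set Implicit Arguments. Unset Strict Implicit. Unset Printing Implicit Defensive.
Import GRing.Theory.
Local Open Scope ring_scope.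

(* Let matrices act on row vectors. Adding up the two coordinates of each
   2-block (and keeping the last coordinate) is a surjection y |-> y P with
   (y A) P = (y P) S, and w |-> w Q = (w_1, -w_1, ..., w_n, -w_n, 0) is an
   injection with (w C) Q = (w Q) A; counting dimensions, the image of Q is the
   kernel of P. Hence A has an invariant subspace on which it acts as C, with
   quotient on which it acts as S, and its eigenvalues are those of S together
   with those of C. *)

Lemma sum_ord_double (V : nmodType) (H : nat -> V) m :
  \sum_(i < m.*2) H i = \sum_(k < m) (H k.*2 + H k.*2.+1).
Proof.
elim: m => [|m IHm]; first by rewrite !big_ord0.
by rewrite doubleS !big_ord_recr /= IHm addrA.
Qed.

Lemma mxBE (V : zmodType) m n (X Y : 'M[V]_(m, n)) i j :
  (X - Y) i j = X i j - Y i j.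
Proof. by rewrite !mxE. Qed.

Lemma eigenvalue_trmx (F : fieldType) m (X : 'M[F]_m) l :
  eigenvalue X^T l = eigenvalue X l.
Proof.
rewrite !eigenvalue_root_char /char_poly -det_tr; congr (root (\det _) l).
by apply/matrixP => i j; rewrite !mxE eq_sym.
Qed.

Section StableQuotient.
Variables (F : fieldType) (m p q : nat).
Variables (A : 'M[F]_m) (S : 'M[F]_p) (C : 'M[F]_q).
Variables (P : 'M[F]_(m, p)) (Q : 'M[F]_(q, m)).
Hypotheses (AP : A *m P = P *m S) (QA : Q *m A = C *m Q).
Hypotheses (P_full : row_full P) (Q_free : row_free Q).
Hypotheses (QP : Q *m P = 0) (dim_mpq : (m <= p + q)%N).

Lemma kermx_stable_quotient : (kermx P <= Q)%MS.
Proof.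
have QsubK : (Q <= kermx P)%MS by apply/sub_kermxP.
rewrite -(mxrank_leqif_sup QsubK) eqn_leq mxrankS //=.
by rewrite mxrank_ker (eqP P_full) (eqP Q_free) leq_subLR.
Qed.

Lemma eigenvalue_quotient l : eigenvalue S l -> eigenvalue A l.
Proof.
rewrite -eigenvalue_trmx -(eigenvalue_trmx A) => /eigenvalueP[u uS u0].
apply/eigenvalueP; exists (u *m P^T).
  by rewrite -mulmxA -trmx_mul AP trmx_mul mulmxA uS scalemxAl.
by rewrite mulmx_free_eq0 // /row_free mxrank_tr.
Qed.

Lemma eigenvalue_stable l : eigenvalue C l -> eigenvalue A l.
Proof.
move=> /eigenvalueP[w wC w0]; apply/eigenvalueP; exists (w *m Q).
  by rewrite -mulmxA QA mulmxA wC scalemxAl.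
by rewrite mulmx_free_eq0.
Qed.

Lemma eigenvalue_stable_or_quotient l :
  eigenvalue A l -> eigenvalue S l \/ eigenvalue C l.
Proof.
move=> /eigenvalueP[y yA y0].
have [yP0 | yP_neq0] := eqVneq (y *m P) 0; last first.
  left; apply/eigenvalueP; exists (y *m P) => //.
  by rewrite -mulmxA -AP mulmxA yA scalemxAl.
have /submxP[w def_y] : (y <= Q)%MS.
  by apply: submx_trans kermx_stable_quotient; apply/sub_kermxP.
right; apply/eigenvalueP; exists w.
  apply: (row_free_inj Q_free).
  by rewrite -mulmxA -QA mulmxA -def_y yA def_y scalemxAl.
by apply: contraNneq y0 => w0; rewrite def_y w0 mul0mx.
Qed.

Lemma eigenvalue_stable_quotientE l :
  eigenvalue A l <-> eigenvalue S l \/ eigenvalue C l.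
Proof.
split; first exact: eigenvalue_stable_or_quotient.
by case; [apply: eigenvalue_quotient | apply: eigenvalue_stable].
Qed.

End StableQuotient.

Section RowsubOne.
Variables (R : pzRingType) (m p q : nat) (f : 'I_q -> 'I_p) (M : 'M[R]_(m, q)).

Lemma mul_mx_rowsub1 i j :
  (M *m rowsub f 1%:M) i j = \sum_(k | f k == j) M i k.
Proof.
rewrite mxE [RHS]big_mkcond; apply: eq_bigr => k _.
by rewrite !mxE; case: eqP; rewrite ?mulr1 ?mulr0.
Qed.

Lemma mul_mx_rowsub1_inj i k :
  injective f -> (M *m rowsub f 1%:M) i (f k) = M i k.
Proof.
move=> f_inj; rewrite mul_mx_rowsub1 (eq_bigl (pred1 k)) ?big_pred1_eq //.
by move=> k'; exact: inj_eq.
Qed.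

Lemma mul_mx_rowsub1_out i j :
  (forall k, f k != j) -> (M *m rowsub f 1%:M) i j = 0.
Proof. by move=> fj; rewrite mul_mx_rowsub1 big_pred0 // => k; exact/negbTE. Qed.

End RowsubOne.

Section PairIndices.
Variable n : nat.
Local Notation N := n.*2.+1.
Local Notation widen := (widen_ord (leqnSn n)).

Fact even_ord_subproof (k : 'I_n) : (k.*2 < N)%N.
Proof. by have := ltn_ord k; lia. Qed.
Definition even_ord (k : 'I_n) : 'I_N := Ordinal (even_ord_subproof k).

Fact odd_ord_subproof (k : 'I_n) : (k.*2.+1 < N)%N.
Proof. by have := ltn_ord k; lia. Qed.
Definition odd_ord (k : 'I_n) : 'I_N := Ordinal (odd_ord_subproof k).

Definition half_ord (c : 'I_N) : 'I_n.+1 := inord (c %/ 2).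

Lemma even_ord_inj : injective even_ord.
Proof. by move=> k k' /(congr1 val) /= /double_inj /val_inj. Qed.

Lemma odd_ord_inj : injective odd_ord.
Proof. by move=> k k' /(congr1 val) [] /double_inj /val_inj. Qed.

Lemma odd_ord_neq_even k k' : odd_ord k != even_ord k'.
Proof. by apply/eqP => /(congr1 val) /=; lia. Qed.

Lemma even_ord_neq_odd k k' : even_ord k != odd_ord k'.
Proof. by rewrite eq_sym odd_ord_neq_even. Qed.

Lemma even_ord_neq_max k : even_ord k != ord_max.
Proof. by apply/eqP => /(congr1 val) /=; have := ltn_ord k; lia. Qed.

Lemma odd_ord_neq_max k : odd_ord k != ord_max.
Proof. by apply/eqP => /(congr1 val) /=; lia. Qed.

Lemma widen_ord_neq_max (k : 'I_n) : widen k != ord_max.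
Proof. by rewrite -val_eqE /= neq_ltn ltn_ord. Qed.

Lemma odd_even_ord k : odd (even_ord k) = false.
Proof. exact: odd_double. Qed.

Lemma odd_odd_ord k : odd (odd_ord k).
Proof. by rewrite /= odd_double. Qed.

Lemma half_even_ord k : half_ord (even_ord k) = widen k.
Proof. by apply/val_inj; rewrite /half_ord /= inordK; have := ltn_ord k; lia. Qed.

Lemma half_odd_ord k : half_ord (odd_ord k) = widen k.
Proof. by apply/val_inj; rewrite /half_ord /= inordK; have := ltn_ord k; lia. Qed.

Lemma half_ord_max : half_ord ord_max = ord_max.
Proof. by apply/val_inj; rewrite /half_ord /= inordK; lia. Qed.

Variant pair_ord_spec : 'I_N -> Type :=
  | IsEven k : pair_ord_spec (even_ord k)
  | IsOdd k : pair_ord_spec (odd_ord k)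
  | IsLast : pair_ord_spec ord_max.

Lemma pair_ordP c : pair_ord_spec c.
Proof.
have [c_lt | c_ge] := ltnP c n.*2; last first.
  have -> : c = ord_max by apply/val_inj; have := ltn_ord c; rewrite /=; lia.
  exact: IsLast.
have k_lt : (c %/ 2 < n)%N by lia.
have [c_odd | c_even] := boolP (odd c).
  have -> : c = odd_ord (Ordinal k_lt) by apply/val_inj => /=; lia.
  exact: IsOdd.
have -> : c = even_ord (Ordinal k_lt) by apply/val_inj => /=; lia.
exact: IsEven.
Qed.

Variant widen_or_max_spec : 'I_n.+1 -> Type :=
  | IsWiden k : widen_or_max_spec (widen k)
  | IsMax : widen_or_max_spec ord_max.

Lemma widen_or_maxP j : widen_or_max_spec j.
Proof.
have [j_lt | j_ge] := ltnP j n.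
  have -> : j = widen (Ordinal j_lt) by apply/val_inj.
  exact: IsWiden.
have -> : j = ord_max by apply/val_inj; have := ltn_ord j; rewrite /=; lia.
exact: IsMax.
Qed.

Lemma sum_ord_pairs (V : nmodType) (G : 'I_N -> V) :
  \sum_c G c = \sum_(k < n) (G (even_ord k) + G (odd_ord k)) + G ord_max.
Proof.
rewrite big_ord_recr /=; congr (_ + _).
rewrite (eq_bigr (fun c : 'I_n.*2 => G (inord c))); last first.
  move=> c _; congr (G _).
  by apply/val_inj; rewrite /= inordK // (leqW (ltn_ord c)).
rewrite (sum_ord_double (fun i => G (inord i))); apply: eq_bigr => k _.
congr (G _ + G _); apply/val_inj;
  by rewrite /= inordK // ?even_ord_subproof ?odd_ord_subproof.
Qed.

End PairIndices.

Section PairMatrices.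
Variables (K : fieldType) (n : nat).
Local Notation N := n.*2.+1.
Local Notation widen := (widen_ord (leqnSn n)).

Definition pair_sum_mx : 'M[K]_(N, n.+1) := rowsub (@half_ord n) 1%:M.
Definition pair_diff_mx : 'M[K]_(n, N) :=
  rowsub (@even_ord n) 1%:M - rowsub (@odd_ord n) 1%:M.

Lemma mul_pair_sum_mx p (M : 'M[K]_(n.+1, p)) r j :
  (pair_sum_mx *m M) r j = M (half_ord r) j.
Proof. by rewrite -rowsubE mxE. Qed.

Lemma mul_mx_pair_sum_widen m (M : 'M[K]_(m, N)) i k :
  (M *m pair_sum_mx) i (widen k) = M i (even_ord k) + M i (odd_ord k).
Proof.
rewrite mul_mx_rowsub1 big_mkcond sum_ord_pairs half_ord_max eq_sym.
rewrite (negbTE (widen_ord_neq_max k)) addr0 (bigD1 k) //=.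
rewrite half_even_ord half_odd_ord eqxx big1 ?addr0 // => k' k'_neq_k.
rewrite half_even_ord half_odd_ord.
by have /negbTE-> : widen k' != widen k := k'_neq_k; rewrite addr0.
Qed.

Lemma mul_mx_pair_sum_max m (M : 'M[K]_(m, N)) i :
  (M *m pair_sum_mx) i ord_max = M i ord_max.
Proof.
rewrite mul_mx_rowsub1 big_mkcond sum_ord_pairs half_ord_max eqxx big1 ?add0r //.
move=> k _; rewrite half_even_ord half_odd_ord.
by rewrite (negbTE (widen_ord_neq_max k)) addr0.
Qed.

Lemma mul_pair_diff_mx p (M : 'M[K]_(N, p)) k c :
  (pair_diff_mx *m M) k c = M (even_ord k) c - M (odd_ord k) c.
Proof. by rewrite mulmxBl -!rowsubE !mxE. Qed.

Lemma mul_mx_pair_diff_even m (M : 'M[K]_(m, n)) i k :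
  (M *m pair_diff_mx) i (even_ord k) = M i k.
Proof.
rewrite mulmxBr mxBE mul_mx_rowsub1_inj; last exact: even_ord_inj.
by rewrite mul_mx_rowsub1_out ?subr0 // => k'; exact: odd_ord_neq_even.
Qed.

Lemma mul_mx_pair_diff_odd m (M : 'M[K]_(m, n)) i k :
  (M *m pair_diff_mx) i (odd_ord k) = - M i k.
Proof.
rewrite mulmxBr mxBE mul_mx_rowsub1_inj; last exact: odd_ord_inj.
by rewrite mul_mx_rowsub1_out ?sub0r // => k'; exact: even_ord_neq_odd.
Qed.

Lemma mul_mx_pair_diff_max m (M : 'M[K]_(m, n)) i :
  (M *m pair_diff_mx) i ord_max = 0.
Proof.
rewrite mulmxBr mxBE !mul_mx_rowsub1_out ?subr0 // => k.
  exact: odd_ord_neq_max.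
exact: even_ord_neq_max.
Qed.

Lemma pair_diff_sum : pair_diff_mx *m pair_sum_mx = 0.
Proof.
apply/matrixP => k j; rewrite mul_pair_diff_mx !mxE.
by rewrite half_even_ord half_odd_ord subrr.
Qed.

Lemma pair_sum_mx_full : row_full pair_sum_mx.
Proof.
rewrite /row_full -mxrank_tr; apply/inj_row_free => v vP0.
have v_half c : v 0 (half_ord c) = 0.
  have := congr1 (fun X => X^T c 0) vP0.
  by rewrite trmx_mul trmxK mul_pair_sum_mx !mxE.
apply/rowP => j; rewrite mxE; case: (widen_or_maxP j) => [k|].
  by rewrite -half_even_ord v_half.
by rewrite -half_ord_max v_half.
Qed.

Lemma pair_diff_mx_free : row_free pair_diff_mx.
Proof.
apply/inj_row_free => w wQ0; apply/rowP => k.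
by rewrite -(mul_mx_pair_diff_even w) wQ0 !mxE.
Qed.

End PairMatrices.

Arguments pair_sum_mx {K n}.
Arguments pair_diff_mx {K n}.

Section BlockMatrix.
Variables (K : fieldType) (n : nat) (a b : 'I_n.+1 -> 'I_n.+1 -> K).
Local Notation A := (blockA a b).
Local Notation widen := (widen_ord (leqnSn n)).

Lemma blockAE r c : A r c =
  if c == ord_max then a (half_ord r) (half_ord c)
  else if odd r == odd c then a (half_ord r) (half_ord c)
  else b (half_ord r) (half_ord c).
Proof. by rewrite mxE. Qed.

Lemma blockA_even_col r k :
  A r (even_ord k) =
  if odd r then b (half_ord r) (widen k) else a (half_ord r) (widen k).
Proof.
rewrite blockAE (negbTE (even_ord_neq_max k)) half_even_ord odd_even_ord.
by case: odd.
Qed.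

Lemma blockA_odd_col r k :
  A r (odd_ord k) =
  if odd r then a (half_ord r) (widen k) else b (half_ord r) (widen k).
Proof.
rewrite blockAE (negbTE (odd_ord_neq_max k)) half_odd_ord odd_odd_ord.
by case: odd.
Qed.

Lemma blockA_max_col r : A r ord_max = a (half_ord r) ord_max.
Proof. by rewrite blockAE eqxx half_ord_max. Qed.

Lemma blockA_pair_sum : A *m pair_sum_mx = pair_sum_mx *m matS a b.
Proof.
apply/matrixP => r j; rewrite mul_pair_sum_mx.
case: (widen_or_maxP j) => [k|].
  rewrite mul_mx_pair_sum_widen blockA_even_col blockA_odd_col mxE.
  by rewrite (negbTE (widen_ord_neq_max k)); case: odd; rewrite // addrC.
by rewrite mul_mx_pair_sum_max blockA_max_col mxE eqxx.
Qed.

Lemma pair_diff_blockA : pair_diff_mx *m A = matC a b *m pair_diff_mx.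
Proof.
apply/matrixP => k c; rewrite mul_pair_diff_mx.
case: (pair_ordP c) => [k'|k'|].
- rewrite mul_mx_pair_diff_even !blockA_even_col odd_even_ord odd_odd_ord.
  by rewrite half_even_ord half_odd_ord mxE.
- rewrite mul_mx_pair_diff_odd !blockA_odd_col odd_even_ord odd_odd_ord.
  by rewrite half_even_ord half_odd_ord mxE opprB.
- rewrite mul_mx_pair_diff_max !blockA_max_col.
  by rewrite half_even_ord half_odd_ord subrr.
Qed.

End BlockMatrix.

Theorem theorem5 (K : closedFieldType) (charK0 : [pchar K] =i pred0)
  (n : nat) (a b : 'I_n.+1 -> 'I_n.+1 -> K) :
  forall l : K,
    spectrum (blockA a b) l <-> (spectrum (matS a b) l \/ spectrum (matC a b) l).
Proof.
move=> l.
apply: (eigenvalue_stable_quotientE (blockA_pair_sum a b) (pair_diff_blockA a b)).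
- exact: pair_sum_mx_full.
- exact: pair_diff_mx_free.
- exact: pair_diff_sum.
- by rewrite addSn addnn.
Qed.
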